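(* Let $y(t)=e^{i\theta(t)}\in C$ be the solution of the spherical mean curvature flow $y'(t)=H^S(y(t))$ with $y(0)=e^{i\theta_0}$, $0<\theta_0<\pi/g$. Then, on its interval of existence, $$\cos g\theta(t)=e^{gnt}\{\cos g\theta_0+\delta\}-\delta.$$
   Context: Let $M^n$ be a compact isoparametric hypersurface in the unit sphere $S^{n+1}\subset\mathbb{R}^{n+2}$ (constant principal curvatures) with $g$ distinct principal curvatures; then $g\in\{1,2,3,4,6\}$. Fix $x_0\in M$ and identify the 2-dimensional normal space $\nu_{x_0}M$ of $M$ in $\mathbb{R}^{n+2}$ with $\mathbb{C}$ so that the two focal submanifolds $M_+$, $M_-$ ($\dim M_+\le\dim M_-$) meet the normal circle at $1$ and $e^{i\pi/g}$. The Weyl chamber is $C=\{re^{i\theta}:r>0,\ 0<\theta<\pi/g\}$. The multiplicity data is $(m_1,m_2)$, $m_1\le m_2$, with $m_1=m_2$ if $g$ is odd and $(m_1+m_2)g=2n$. For $x\in C$, $M_x$ is the submanifold of $\mathbb{R}^{n+2}$ parallel to $M$ through $x$, and $H^S(x)$ is its mean curvature vector at $x$ as a hypersurface of $S^{n+1}(|x|)$, which equals $-\frac{n}{r}ie^{i\theta}\{\cot g\theta+\delta\csc g\theta\}$ for $x=re^{i\theta}$. The spherical MCF of $M_{y(0)}$ is the family $M_{y(t)}$. Set $\delta=(m_2-m_1)/(m_2+m_1)$ if $g\ge2$ and $\delta=0$ if $g=1$. *)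

(* real analysis with Stdlib Reals.
   Points of the normal plane nu_{x0} M ~ C are represented as pairs (x1,x2) : R*R,
   x1 + i x2. *)
From Stdlib Require Import Reals.
Open Scope R_scope.

Definition cmod (x : R * R) : R := sqrt (fst x * fst x + snd x * snd x).

(* the argument theta in (0, pi) of a point with positive imaginary part *)
Definition carg (x : R * R) : R := acos (fst x / cmod x).

Definition in_chamber (g : nat) (x : R * R) : Prop :=
  0 < snd x /\ 0 < carg x < PI / INR g.

Definition delta (g m1 m2 : nat) : R :=
  if (g <=? 1)%nat then 0 else (INR m2 - INR m1) / (INR m2 + INR m1).

(* H^S(x) = -(n/r) i e^{i theta} { cot(g theta) + delta csc(g theta) },  x = r e^{i theta}.
   Since i e^{i theta} = (-sin theta, cos theta), this is the pair below. *)
Definition HS (g m1 m2 n : nat) (x : R * R) : R * R :=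
  let r := cmod x in
  let th := carg x in
  let K := cos (INR g * th) / sin (INR g * th) + delta g m1 m2 / sin (INR g * th) in
  ( INR n / r * K * sin th , - (INR n / r * K * cos th) ).

Definition admissible_data (g m1 m2 n : nat) : Prop :=
  (g = 1 \/ g = 2 \/ g = 3 \/ g = 4 \/ g = 6)%nat /\
  (1 <= m1)%nat /\ (m1 <= m2)%nat /\
  (Nat.odd g = true -> m1 = m2) /\
  ((m1 + m2) * g = 2 * n)%nat.

(* Along the flow |y| stays 1, because H^S(y) is orthogonal to y.  On the unit
   circle the angle theta = acos y1 obeys theta' = -n (cos g theta + delta) / sin g theta,
   so u = cos g theta + delta satisfies the linear equation u' = g n u, whence
   u(t) = e^{g n t} u(0). *)
From Stdlib Require Import Reals Lra.
Open Scope R_scope.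

Lemma derivable_pt_lim_acos x :
  -1 < x < 1 -> derivable_pt_lim acos x (-1 / sqrt (1 - x²)).
Proof. intro Hx; exact (derive_pt_eq_1 _ _ _ _ (derive_pt_acos x Hx)). Qed.

Lemma null_derivative_on_interval (f : R -> R) a b :
  (forall x, a < x < b -> derivable_pt_lim f x 0) ->
  forall s t, a < s < b -> a < t < b -> f s = f t.
Proof.
  intros Hf.
  assert (Hlt : forall s t, a < s < b -> a < t < b -> s < t -> f s = f t).
  { intros s t Hs Ht Hst.
    destruct (MVT_cor2 f (fun _ => 0) s t Hst) as [c [Hc _]].
    - intros c Hc; apply Hf; lra.
    - lra. }
  intros s t Hs Ht; destruct (Rtotal_order s t) as [Hst|[->|Hts]].
  - exact (Hlt s t Hs Ht Hst).
  - reflexivity.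
  - symmetry; exact (Hlt t s Ht Hs Hts).
Qed.

Lemma linear_ode_solution (u : R -> R) c a b :
  a < 0 < b ->
  (forall x, a < x < b -> derivable_pt_lim u x (c * u x)) ->
  forall t, a < t < b -> u t = exp (c * t) * u 0.
Proof.
  intros H0 Hu t Ht.
  assert (Hconst : u t * exp (- c * t) = u 0 * exp (- c * 0)).
  { apply (null_derivative_on_interval (fun s => u s * exp (- c * s)) a b);
      [|assumption|lra].
    intros x Hx.
    assert (Hlin : derivable_pt_lim (fun s => - c * s) x (- c)).
    { pose proof (derivable_pt_lim_scal id (- c) x 1 (derivable_pt_lim_id x)) as Hs.
      unfold mult_real_fct, id in Hs; rewrite Rmult_1_r in Hs; exact Hs. }
    assert (Hexp := derivable_pt_lim_comp _ exp _ _ _ Hlin (derivable_pt_lim_exp _)).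
    assert (Hprod := derivable_pt_lim_mult _ _ _ _ _ (Hu x Hx) Hexp).
    unfold mult_fct, comp in Hprod; simpl in Hprod.
    replace 0 with (c * u x * exp (- c * x) + u x * (exp (- c * x) * - c)) by ring.
    exact Hprod. }
  rewrite Rmult_0_r, exp_0, Rmult_1_r in Hconst.
  rewrite <- Hconst, (Rmult_comm (u t)), <- Rmult_assoc, <- exp_plus.
  replace (c * t + - c * t) with 0 by ring.
  rewrite exp_0; ring.
Qed.

Section Chamber_geometry.

Variable x : R * R.
Hypothesis upper : 0 < snd x.

Lemma cmod_pos : 0 < cmod x.
Proof. unfold cmod; apply sqrt_lt_R0; nra. Qed.

Lemma cmod_sqr : cmod x * cmod x = fst x * fst x + snd x * snd x.
Proof. unfold cmod; apply sqrt_sqrt; nra. Qed.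

Lemma cos_carg : cos (carg x) = fst x / cmod x.
Proof.
  pose proof cmod_pos; pose proof cmod_sqr.
  unfold carg; apply cos_acos.
  assert (Hq : (fst x / cmod x) * (fst x / cmod x) <= 1).
  { replace ((fst x / cmod x) * (fst x / cmod x))
      with (fst x * fst x / (cmod x * cmod x)) by (field; lra).
    apply Rmult_le_reg_r with (cmod x * cmod x); [nra|].
    unfold Rdiv; rewrite Rmult_assoc, Rinv_l by nra; nra. }
  split; nra.
Qed.

Lemma sin_carg : sin (carg x) = snd x / cmod x.
Proof.
  pose proof cmod_pos; pose proof cmod_sqr.
  assert (Hsin : 0 <= sin (carg x)).
  { apply sin_ge_0; unfold carg; apply acos_bound. }
  assert (Hsq : sin (carg x) * sin (carg x) = (snd x / cmod x) * (snd x / cmod x)).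
  { pose proof (sin2_cos2 (carg x)) as Hpyth; unfold Rsqr in Hpyth.
    rewrite cos_carg in Hpyth.
    apply Rmult_eq_reg_r with (cmod x * cmod x); [|nra].
    replace (snd x / cmod x * (snd x / cmod x) * (cmod x * cmod x))
      with (snd x * snd x) by (field; lra).
    replace (sin (carg x) * sin (carg x))
      with (1 - fst x / cmod x * (fst x / cmod x)) by lra.
    field_simplify; [lra|lra]. }
  assert (0 < snd x / cmod x) by (apply Rdiv_lt_0_compat; lra).
  nra.
Qed.

Lemma HS_orthogonal g m1 m2 n :
  fst x * fst (HS g m1 m2 n x) + snd x * snd (HS g m1 m2 n x) = 0.
Proof. unfold HS; simpl; rewrite cos_carg, sin_carg; unfold Rdiv; ring. Qed.

End Chamber_geometry.

Lemma carg_unit x : cmod x = 1 -> carg x = acos (fst x).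
Proof. intro H; unfold carg; rewrite H, Rdiv_1_r; reflexivity. Qed.

Section Spherical_flow.

Context {g m1 m2 n : nat} {a b : R} {y1 y2 : R -> R}.
Hypothesis chamber : forall t, a < t < b -> in_chamber g (y1 t, y2 t).
Hypothesis flow : forall t, a < t < b ->
  derivable_pt_lim y1 t (fst (HS g m1 m2 n (y1 t, y2 t))) /\
  derivable_pt_lim y2 t (snd (HS g m1 m2 n (y1 t, y2 t))).

Lemma flow_modulus_constant s t : a < s < b -> a < t < b ->
  y1 s * y1 s + y2 s * y2 s = y1 t * y1 t + y2 t * y2 t.
Proof.
  apply (null_derivative_on_interval (fun s => y1 s * y1 s + y2 s * y2 s)).
  intros x Hx; destruct (flow x Hx) as [D1 D2].
  assert (Horth := HS_orthogonal (y1 x, y2 x) (proj1 (chamber x Hx)) g m1 m2 n).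
  assert (Hd := derivable_pt_lim_plus _ _ _ _ _
    (derivable_pt_lim_mult _ _ _ _ _ D1 D1) (derivable_pt_lim_mult _ _ _ _ _ D2 D2)).
  cbn [fst snd] in Horth; set (h := HS g m1 m2 n (y1 x, y2 x)) in *.
  replace 0 with (fst h * y1 x + y1 x * fst h + (snd h * y2 x + y2 x * snd h)) by lra.
  exact Hd.
Qed.

Hypothesis on_unit_circle : forall t, a < t < b -> y1 t * y1 t + y2 t * y2 t = 1.
Hypothesis g_pos : 0 < INR g.

Section At_time.

Variable t : R.
Hypothesis interval : a < t < b.

Lemma flow_upper : 0 < y2 t.
Proof. exact (proj1 (chamber t interval)). Qed.

Lemma flow_first_coord_bound : -1 < y1 t < 1.
Proof. pose proof flow_upper; pose proof (on_unit_circle t interval); split; nra. Qed.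

Lemma flow_cmod : cmod (y1 t, y2 t) = 1.
Proof. unfold cmod; simpl; rewrite (on_unit_circle t interval); exact sqrt_1. Qed.

Lemma flow_carg : carg (y1 t, y2 t) = acos (y1 t).
Proof. exact (carg_unit _ flow_cmod). Qed.

Lemma flow_sqrt_eq : sqrt (1 - (y1 t)²) = y2 t.
Proof.
  pose proof flow_upper; pose proof (on_unit_circle t interval).
  replace (1 - (y1 t)²) with (y2 t)² by (unfold Rsqr; lra).
  apply sqrt_Rsqr; lra.
Qed.

Lemma flow_angle_in_chamber : 0 < acos (y1 t) < PI / INR g.
Proof. rewrite <- flow_carg; exact (proj2 (chamber t interval)). Qed.

Lemma flow_sin_g_angle_pos : 0 < sin (INR g * acos (y1 t)).
Proof.
  pose proof flow_angle_in_chamber as [H0 Hpi].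
  apply sin_gt_0; [nra|].
  replace PI with (INR g * (PI / INR g)) by (field; lra).
  apply Rmult_lt_compat_l; assumption.
Qed.

Lemma flow_HS_fst : fst (HS g m1 m2 n (y1 t, y2 t)) =
  INR n * (cos (INR g * acos (y1 t)) + delta g m1 m2) / sin (INR g * acos (y1 t)) * y2 t.
Proof.
  pose proof (flow_sin_g_angle_pos).
  unfold HS; simpl; rewrite flow_cmod, flow_carg, sin_acos, flow_sqrt_eq.
  - field; lra.
  - pose proof flow_first_coord_bound; lra.
Qed.

Lemma flow_angle_derivative :
  derivable_pt_lim (fun s => acos (y1 s)) t
    (- INR n * (cos (INR g * acos (y1 t)) + delta g m1 m2) / sin (INR g * acos (y1 t))).
Proof.
  pose proof flow_upper; pose proof flow_sin_g_angle_pos.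
  assert (Hd := derivable_pt_lim_comp _ _ _ _ _ (proj1 (flow t interval))
                  (derivable_pt_lim_acos _ flow_first_coord_bound)).
  rewrite flow_sqrt_eq, flow_HS_fst in Hd; unfold comp in Hd.
  replace (- INR n * _ / _) with
    (-1 / y2 t * (INR n * (cos (INR g * acos (y1 t)) + delta g m1 m2)
                  / sin (INR g * acos (y1 t)) * y2 t)) by (field; lra).
  exact Hd.
Qed.

Lemma flow_cos_g_angle_derivative :
  derivable_pt_lim (fun s => cos (INR g * acos (y1 s)) + delta g m1 m2) t
    (INR g * INR n * (cos (INR g * acos (y1 t)) + delta g m1 m2)).
Proof.
  pose proof flow_sin_g_angle_pos.
  assert (Hgangle := derivable_pt_lim_scal _ (INR g) _ _ flow_angle_derivative).
  assert (Hcos := derivable_pt_lim_comp _ _ _ _ _ Hgangle (derivable_pt_lim_cos _)).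
  assert (Hd := derivable_pt_lim_plus _ _ _ _ _ Hcos
                  (derivable_pt_lim_const (delta g m1 m2) t)).
  unfold plus_fct, comp, mult_real_fct in Hd.
  replace (INR g * INR n * _) with
    (- sin (INR g * acos (y1 t)) * (INR g * (- INR n * (cos (INR g * acos (y1 t))
       + delta g m1 m2) / sin (INR g * acos (y1 t)))) + 0) by (field; lra).
  exact Hd.
Qed.

End At_time.
End Spherical_flow.

Lemma admissible_data_g_ge_1 g m1 m2 n : admissible_data g m1 m2 n -> 1 <= INR g.
Proof.
  intros [Hg _]; apply (le_INR 1).
  destruct Hg as [->|[->|[->|[->| ->]]]]; auto with arith.
Qed.

Theorem proposition4p3 (g m1 m2 n : nat) (theta0 a b : R) (y1 y2 : R -> R) :
  admissible_data g m1 m2 n ->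
  0 < theta0 < PI / INR g ->
  a < 0 < b ->
  y1 0 = cos theta0 -> y2 0 = sin theta0 ->
  (forall t, a < t < b -> in_chamber g (y1 t, y2 t)) ->
  (forall t, a < t < b ->
     derivable_pt_lim y1 t (fst (HS g m1 m2 n (y1 t, y2 t))) /\
     derivable_pt_lim y2 t (snd (HS g m1 m2 n (y1 t, y2 t)))) ->
  forall t, a < t < b ->
    exists theta : R,
      0 < theta < PI / INR g /\
      y1 t = cos theta /\ y2 t = sin theta /\
      cos (INR g * theta) =
        exp (INR g * INR n * t) * (cos (INR g * theta0) + delta g m1 m2)
        - delta g m1 m2.
Proof.
  intros Hadm Hth0 Hab Hy10 Hy20 Hch Hflow t Ht.
  assert (Hg := admissible_data_g_ge_1 _ _ _ _ Hadm).
  assert (Hcircle : forall s, a < s < b -> y1 s * y1 s + y2 s * y2 s = 1).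
  { intros s Hs; rewrite (flow_modulus_constant Hch Hflow s 0 Hs Hab).
    rewrite Hy10, Hy20, Rplus_comm; exact (sin2_cos2 theta0). }
  assert (Hth0_le_PI : theta0 <= PI).
  { apply Rle_trans with (PI / INR g); [lra|].
    apply Rmult_le_reg_r with (INR g); [lra|].
    unfold Rdiv; rewrite Rmult_assoc, Rinv_l by lra; pose proof PI_RGT_0; nra. }
  assert (Hu := linear_ode_solution _ _ a b Hab
    (flow_cos_g_angle_derivative Hch Hflow Hcircle ltac:(lra)) t Ht).
  cbv beta in Hu; rewrite Hy10, acos_cos in Hu by lra.
  pose proof (flow_first_coord_bound Hch Hcircle t Ht).
  exists (acos (y1 t)); split; [|split; [|split]].
  - exact (flow_angle_in_chamber Hch Hcircle t Ht).
  - rewrite cos_acos; lra.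
  - rewrite sin_acos, (flow_sqrt_eq Hch Hcircle t Ht) by lra; reflexivity.
  - rewrite <- Hu; ring.
Qed.
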